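(* For every ribbon graph $\mathbb{G}$, the $\Delta$-matroid $D(\mathbb{G})=(E(\mathbb{G}),\mathcal{Q}(\mathbb{G}))$ is strong.
   Context: A ribbon graph $\mathbb{G}$ is a surface with boundary written as the union of vertex discs $V(\mathbb{G})$ and edge discs $E(\mathbb{G})$ meeting in disjoint line segments, each on the boundary of exactly one vertex and exactly one edge, with each edge containing exactly two such segments. For connected $\mathbb{G}$, a quasi-tree is $F\subseteq E(\mathbb{G})$ such that the spanning ribbon subgraph $(V(\mathbb{G}),F)$ has exactly one boundary component; in general, a union of quasi-trees of the components. $\mathcal{Q}(\mathbb{G})$ is the set of quasi-trees. A $\Delta$-matroid $(E,\mathcal{B})$ is strong if for all $B,B'\in\mathcal{B}$ and $x\in B\triangle B'$ there is $y\in B\triangle B'$ with both $B\triangle\{x,y\}\in\mathcal{B}$ and $B'\triangle\{x,y\}\in\mathcal{B}$. *)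

From mathcomp Require Import all_boot.
Set Implicit Arguments.
Unset Strict Implicit.
Unset Printing Implicit Defensive.

(* X = flags: the two endpoints of each attaching segment (edge end), so each
   edge has 4 flags.
   - rg_vt x : the vertex disc whose boundary contains flag x;
   - rg_ed x : the edge disc whose boundary contains flag x;
   - rg_alpha : swaps the two endpoints of the same attaching segment;
   - rg_eps   : joins the two endpoints of a side of the edge disc
                (a side runs from one attaching segment to the other);
   - rg_nu    : joins the two endpoints of an arc of the vertex boundary lying
                between consecutive attaching segments.
   Vertices with no flags are isolated vertices. *)
Record ribbon_graph (V E X : finType) := RibbonGraph {
  rg_vt : X -> V;
  rg_ed : X -> E;
  rg_alpha : X -> X;
  rg_eps : X -> X;
  rg_nu : X -> X;
  rg_alphaK : forall x, rg_alpha (rg_alpha x) = x;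
  rg_epsK : forall x, rg_eps (rg_eps x) = x;
  rg_nuK : forall x, rg_nu (rg_nu x) = x;
  rg_alpha_eps : forall x, rg_alpha (rg_eps x) = rg_eps (rg_alpha x);
  rg_alpha_nfix : forall x, rg_alpha x != x;
  rg_eps_nfix : forall x, rg_eps x != x;
  rg_alpha_eps_nfix : forall x, rg_alpha (rg_eps x) != x;
  rg_nu_nfix : forall x, rg_nu x != x;
  rg_ed_alpha : forall x, rg_ed (rg_alpha x) = rg_ed x;
  rg_ed_eps : forall x, rg_ed (rg_eps x) = rg_ed x;
  rg_vt_alpha : forall x, rg_vt (rg_alpha x) = rg_vt x;
  rg_vt_nu : forall x, rg_vt (rg_nu x) = rg_vt x;
  rg_edge4 : forall e, #|[set x | rg_ed x == e]| = 4;
  (* the boundary of each vertex disc is a single circle *)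
  rg_vertex_circle : forall x y, rg_vt x = rg_vt y ->
    connect [rel a b | (b == rg_alpha a) || (b == rg_nu a)] x y
}.

Section RibbonDefs.
Variables (V E X : finType) (G : ribbon_graph V E X).

(* One step along the boundary of the spanning ribbon subgraph (V(G), F):
   along a vertex arc, then either along a side of an edge of F, or across the
   attaching segment of a deleted edge (not in F). *)
Definition bstep (F : {set E}) : rel X :=
  [rel x y | (y == rg_nu G x) ||
             (y == if rg_ed G x \in F then rg_eps G x else rg_alpha G x)].

Definition vadj : rel V :=
  [rel u v | [exists x, (rg_vt G x == u) && (rg_vt G (rg_eps G x) == v)]].

(* boundary components of (V(G), F) lying in the connected component of G
   containing v: boundary cycles through flags, plus isolated vertices. *)
Definition n_boundary_in (F : {set E}) (v : V) : nat :=
  #|[set [set y | connect (bstep F) x y]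
       | x in [set x | connect vadj v (rg_vt G x)]]|
  + #|[set u | connect vadj v u && [forall x, rg_vt G x != u]]|.

Definition quasi_trees : {set {set E}} :=
  [set F | [forall v, n_boundary_in F v == 1]].

End RibbonDefs.

Definition symdiff (T : finType) (A B : {set T}) : {set T} :=
  (A :\: B) :|: (B :\: A).

Definition is_delta_matroid (T : finType) (B : {set {set T}}) : Prop :=
  B != set0 /\
  forall B1 B2, B1 \in B -> B2 \in B -> forall x, x \in symdiff B1 B2 ->
    exists2 y, y \in symdiff B1 B2 & symdiff B1 [set x; y] \in B.

Definition is_strong_delta_matroid (T : finType) (B : {set {set T}}) : Prop :=
  is_delta_matroid B /\
  forall B1 B2, B1 \in B -> B2 \in B -> forall x, x \in symdiff B1 B2 ->
    exists2 y, y \in symdiff B1 B2 &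
      (symdiff B1 [set x; y] \in B) /\ (symdiff B2 [set x; y] \in B).

(* The flags of G carry fixed-point-free involutions [nu], [alpha], [eps]; the
   boundary components of (V(G), F) are the orbits of [nu] and [sigma F], which
   is [eps] on the flags of edges of F and [alpha] elsewhere.  Hence F is a
   quasi-tree iff any two flags in a component of G are joined by a boundary
   path.  Toggling the edge of a flag c replaces [sigma F] by [tau \o sigma F]
   on the four flags of that edge ([tau = alpha \o eps]); when c and [tau c]
   lie on different boundary components, this merges them and keeps every
   other connection.  In particular a set F maximising the number of connected
   pairs of flags is a quasi-tree.
   Boundary cycles alternate [nu]- and [sigma]-steps, so they have even length,
   and on a quasi-tree the orbits of the rotation [nu \o sigma F] 2-colour each
   component so that [nu] and [sigma F] change colour.
   Let F1, F2 be quasi-trees and x = ed a an edge of F1 △ F2.  If F1 △ x and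
   F2 △ x are quasi-trees, take y = x.  Otherwise, say F1 △ x is not, and its
   boundary cycle P through a meets x only in a and [sigma a].  A flag g of P
   whose toggle repairs both F1 △ x and F2 △ x must exist: otherwise a
   fixed-point-free involution on the remaining flags of P would swap the
   colours of F2 △ x (if it is a quasi-tree), although [nu] balances them on P
   and a, [sigma a] have the same colour; or (if not) would pair off the odd set
   of flags other than a on both boundary cycles through a.  Then y = ed g. *)

From mathcomp Require Import all_boot perm fingroup zify.

Set Implicit Arguments.
Unset Strict Implicit.
Unset Printing Implicit Defensive.

Section FiniteFacts.
Variable T : finType.
Implicit Types (A B S : {set T}) (f : T -> T) (s : {perm T}).

Lemma connect_ind (e : rel T) (P : T -> Prop) x y :
  connect e x y -> P x -> (forall a b, e a b -> P a -> P b) -> P y.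
Proof.
move=> /connectP[p]; elim: p x => [|z p IH] x /=; first by move=> _ -> .
by case/andP=> exz pz yz Px step; apply: IH pz yz (step _ _ exz Px) step.
Qed.

Lemma even_card_involution S f :
  {in S, forall z, [/\ f z \in S, f z != z & f (f z) = z]} -> ~~ odd #|S|.
Proof.
elim: {S}_.+1 {-2}S (ltnSn #|S|) => // n IH S ltS fS.
have [-> | [z zS]] := set_0Vmem S; first by rewrite cards0.
have [fzS fzz ffz] := fS z zS.
have cardS : #|S| = #|S :\ z :\ f z|.+2.
  by rewrite (cardsD1 z S) zS (cardsD1 (f z) (S :\ z)) !inE fzz fzS.
rewrite cardS /= negbK; apply: IH; first by move: ltS; rewrite cardS; lia.
move=> w; rewrite !inE => /and3P[wfz wz wS]; have [fwS fww ffw] := fS w wS.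
split=> //; rewrite fwS andbT; apply/andP; split.
- by apply: contra wz => /eqP fwz; rewrite -ffw fwz ffz.
- by apply: contra wfz => /eqP fwz; rewrite -ffw fwz.
Qed.

Lemma card_involution_swap S A f :
  {in S, forall z, [/\ f z \in S, (f z \in A) != (z \in A) & f (f z) = z]} ->
  #|S :&: A| = #|S :\: A|.
Proof.
move=> fS.
have f_inj : {in S &, injective f}.
  move=> y z yS zS eq_f; have [_ _ <-] := fS y yS; have [_ _ <-] := fS z zS.
  by rewrite eq_f.
have le_image B B' : B \subset S -> f @: B \subset B' -> #|B| <= #|B'|.
  move=> sBS /subset_leq_card; rewrite card_in_imset // => y z yB zB.
  by apply: f_inj; apply: (subsetP sBS).
apply/eqP; rewrite eqn_leq !le_image ?subsetIl ?subsetDl //.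
- apply/subsetP=> w /imsetP[z]; rewrite !inE => /andP[zA zS] ->.
  have [fzS fzA _] := fS z zS; rewrite fzS; move: fzA.
  by rewrite (negbTE zA); case: (f z \in A).
- apply/subsetP=> w /imsetP[z]; rewrite !inE => /andP[zS zA] ->.
  have [fzS fzA _] := fS z zS; rewrite fzS andbT; move: fzA.
  by rewrite zA; case: (f z \in A).
Qed.

Lemma cardsI_D2 S A p q : p \in S -> q \in S -> p != q ->
  #|S :&: A| = (p \in A) + (q \in A) + #|(S :\ p :\ q) :&: A|.
Proof.
move=> pS qS pq.
rewrite (cardsD1 p (S :&: A)) (cardsD1 q ((S :&: A) :\ p)) !inE pS qS eq_sym pq /=.
rewrite addnA; congr (_ + _ + _); apply: eq_card => z; rewrite !inE.
by case: (z == q); case: (z == p); case: (z \in S); case: (z \in A).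
Qed.

Lemma porbit_step s x y : y \in porbit s x -> s y \in porbit s x.
Proof.
move=> yx; have /eqP <- : porbit s y == porbit s x by rewrite eq_porbit_mem.
by have := mem_porbit s 1 y; rewrite expg1.
Qed.

Lemma porbit_stepV s x y : y \in porbit s x -> (s^-1)%g y \in porbit s x.
Proof. by move=> yx; rewrite -porbitV; apply: porbit_step; rewrite porbitV. Qed.

Lemma porbit_tperm_mul s x y : x != y ->
  x \in porbit s y -> x \notin porbit (tperm x y * s) y.
Proof.
move=> xy xs; have := porbits_mul_tperm s x y; rewrite /= xs xy /=.
have := porbits_mul_tperm (tperm x y * s) x y; rewrite /= tpermKg xy.
by case: (x \in porbit (tperm x y * s) y) => //=; lia.
Qed.

Lemma involution_notin_porbit s (i j : T -> T) x :
  involutive i -> involutive j -> (forall y, i y != y) -> (forall y, j y != y) ->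
  s =1 i \o j -> i x \notin porbit s x.
Proof.
move=> iK jK i_free j_free sE; apply/negP => /porbitP[k]; rewrite permX => ixk.
have s_i_s y : s (i (s y)) = i y by rewrite !sE /= iK jK.
have i_iter m : m <= k -> i (iter m s x) = iter (k - m) s x.
  elim: m => [|m IH] lemk; first by rewrite subn0.
  have km : k - m = (k - m.+1).+1 by lia.
  by apply: (@perm_inj _ s); rewrite iterS s_i_s IH ?(ltnW lemk) // km iterS.
have [m kE] : exists m, odd k + m.*2 = k by exists k./2; exact: odd_double_half.
have lemk : m <= k by case: (odd k) kE => /= kE; lia.
have := i_iter m lemk; case: (odd k) kE => /= kE.
- have -> : k - m = m.+1 by lia.
  rewrite iterS sE /= => /(can_inj iK) jm.
  by have := j_free (iter m s x); rewrite -jm eqxx.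
- have -> : k - m = m by lia.
  by move=> im; have := i_free (iter m s x); rewrite im eqxx.
Qed.

End FiniteFacts.
Arguments connect_ind {T e} P {x y}.

Section Symdiff.
Variable T : finType.
Implicit Types (A B : {set T}) (t r : T).

Definition toggle A t := symdiff A [set t].

Lemma in_symdiff A B r : (r \in symdiff A B) = ((r \in A) != (r \in B)).
Proof. by rewrite /symdiff !inE; case: (r \in A); case: (r \in B). Qed.

Lemma symdiffC A B : symdiff A B = symdiff B A.
Proof. by apply/setP=> r; rewrite !in_symdiff; case: (r \in A); case: (r \in B). Qed.

Lemma symdiff_toggle A t : symdiff A (toggle A t) = [set t].
Proof.
by apply/setP=> r; rewrite /toggle !in_symdiff !inE; case: (r \in A); case: (r == t).
Qed.

Lemma symdiff_toggle2 A B t : symdiff (toggle A t) (toggle B t) = symdiff A B.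
Proof.
apply/setP=> r; rewrite /toggle !in_symdiff !inE.
by case: (r \in A); case: (r \in B); case: (r == t).
Qed.

Lemma toggleK A t : toggle (toggle A t) t = A.
Proof.
by apply/setP=> r; rewrite /toggle !in_symdiff !inE; case: (r \in A); case: (r == t).
Qed.

Lemma toggle2 A t r : t != r -> toggle (toggle A t) r = symdiff A [set t; r].
Proof.
move=> tr; apply/setP=> s; rewrite /toggle !in_symdiff !inE.
have [-> | _] := eqVneq s t; first by rewrite (negbTE tr); case: (t \in A).
by case: (s \in A); case: (s == r).
Qed.

Lemma in_symdiff_toggle2 A t r s :
  s \in symdiff A (toggle (toggle A t) r) -> (s == t) || (s == r).
Proof.
by rewrite /toggle !in_symdiff !inE; case: (s \in A); case: (s == t); case: (s == r).
Qed.

End Symdiff.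

Section RibbonFlags.
Variables (V E X : finType) (G : ribbon_graph V E X).
Local Notation nu := (rg_nu G).
Local Notation al := (rg_alpha G).
Local Notation ep := (rg_eps G).
Local Notation ed := (rg_ed G).
Local Notation vt := (rg_vt G).
Implicit Types (F : {set E}) (a b c g h p q x y z : X) (S : {set X}).

Definition tau x := al (ep x).

Lemma tauK : involutive tau.
Proof. by move=> x; rewrite /tau rg_alpha_eps rg_alphaK rg_epsK. Qed.

Lemma tau_neq x : tau x != x. Proof. exact: rg_alpha_eps_nfix. Qed.

Lemma ed_tau x : ed (tau x) = ed x. Proof. by rewrite /tau rg_ed_alpha rg_ed_eps. Qed.

Lemma tau_alpha x : tau (al x) = ep x. Proof. by rewrite /tau rg_alpha_eps rg_alphaK. Qed.

Lemma tau_eps x : tau (ep x) = al x. Proof. by rewrite /tau rg_epsK. Qed.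

Lemma edge_flags x y : ed y = ed x -> [\/ y = x, y = al x, y = ep x | y = tau x].
Proof.
move=> exy; pose s := [:: x; al x; ep x; tau x].
have al_ep : al x != ep x.
  by apply: contra (tau_neq x) => /eqP al_ep; rewrite /tau -al_ep rg_alphaK.
have al_tau : al x != tau x.
  by apply: contra (rg_eps_nfix G x) => /eqP /(can_inj (rg_alphaK G)) <-.
have ep_tau : ep x != tau x.
  by apply: contra (rg_alpha_nfix G (ep x)); rewrite /tau => /eqP <-.
have edge_s : [set z in s] = [set z | ed z == ed x].
  apply/eqP; rewrite eqEcard rg_edge4 cardsE (card_uniqP _) /=; last first.
    rewrite !inE !negb_or !(eq_sym x) rg_alpha_nfix rg_eps_nfix tau_neq.
    by rewrite al_ep al_tau ep_tau.
  rewrite andbT; apply/subsetP=> z; rewrite !inE.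
  by case/or4P=> /eqP->; rewrite ?rg_ed_alpha ?rg_ed_eps ?ed_tau.
have : y \in [set z | ed z == ed x] by rewrite inE exy.
rewrite -edge_s !inE => /or4P[] /eqP->;
  by [apply: Or41 | apply: Or42 | apply: Or43 | apply: Or44].
Qed.

Definition sigma F x := if ed x \in F then ep x else al x.

Lemma ed_sigma F x : ed (sigma F x) = ed x.
Proof. by rewrite /sigma; case: ifP; rewrite ?rg_ed_alpha ?rg_ed_eps. Qed.

Lemma sigmaK F : involutive (sigma F).
Proof.
move=> x; rewrite {1}/sigma ed_sigma /sigma.
by case: (ed x \in F); rewrite ?rg_alphaK ?rg_epsK.
Qed.

Lemma sigma_neq F x : sigma F x != x.
Proof. by rewrite /sigma; case: ifP => _; [exact: rg_eps_nfix | exact: rg_alpha_nfix]. Qed.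

Lemma sigma_tau F x : sigma F (tau x) = tau (sigma F x).
Proof.
rewrite /sigma ed_tau; case: ifP => _; last by rewrite tau_alpha /tau rg_alphaK.
by rewrite tau_eps /tau -rg_alpha_eps rg_epsK.
Qed.

Lemma edge_flags_sigma F c z : ed z = ed c ->
  [\/ z = c, z = sigma F c, z = tau c | z = tau (sigma F c)].
Proof.
rewrite /sigma; case/edge_flags=> ->; [exact: Or41 | | | exact: Or43];
  case: ifP => _; rewrite ?tau_alpha ?tau_eps; by [apply: Or42 | apply: Or44].
Qed.

Lemma sigma_symdiff F F' x :
  sigma F' x = if ed x \in symdiff F F' then tau (sigma F x) else sigma F x.
Proof.
rewrite in_symdiff /sigma.
by case: (ed x \in F); case: (ed x \in F'); rewrite /= ?tau_alpha ?tau_eps.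
Qed.

Lemma sigma_out F F' x : ed x \notin symdiff F F' -> sigma F' x = sigma F x.
Proof. by rewrite (sigma_symdiff F F') => /negbTE ->. Qed.

Lemma sigma_in F F' x : ed x \in symdiff F F' -> sigma F' x = tau (sigma F x).
Proof. by rewrite (sigma_symdiff F F') => ->. Qed.

Lemma sigma_toggle F c z : ed z = ed c -> sigma (toggle F (ed c)) z = tau (sigma F z).
Proof. by move=> ez; apply: sigma_in; rewrite symdiff_toggle inE ez. Qed.

Lemma sigma_toggle_out F e z : ed z != e -> sigma (toggle F e) z = sigma F z.
Proof. by move=> ez; apply: sigma_out; rewrite symdiff_toggle inE. Qed.

Local Notation bconnect F := (connect (bstep G F)).

Definition bcomp F x : {set X} := [set z | bconnect F x z].

Definition bclosed F S := {in S, forall z, (nu z \in S) && (sigma F z \in S)}.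

Lemma bstepE F x y : bstep G F x y = (y == nu x) || (y == sigma F x).
Proof. by []. Qed.

Lemma bstep_sym F : symmetric (bstep G F).
Proof.
move=> x y; rewrite !bstepE.
by apply/idP/idP => /orP[] /eqP->; rewrite ?rg_nuK ?sigmaK eqxx ?orbT.
Qed.

Lemma bconnect_sym F : connect_sym (bstep G F).
Proof. exact: sym_connect_sym (@bstep_sym F). Qed.

Lemma bconnect_nu F x y : bconnect F x y -> bconnect F x (nu y).
Proof. by move=> xy; apply: connect_trans xy (connect1 _); rewrite bstepE eqxx. Qed.

Lemma bconnect_sigma F x y : bconnect F x y -> bconnect F x (sigma F y).
Proof. by move=> xy; apply: connect_trans xy (connect1 _); rewrite bstepE eqxx orbT. Qed.

Lemma bcomp_eq F x y : bconnect F x y -> bcomp F x = bcomp F y.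
Proof. by move=> xy; apply/setP=> z; rewrite !inE (same_connect (bconnect_sym F) xy). Qed.

Lemma bcomp_closed F x : bclosed F (bcomp F x).
Proof. by move=> z; rewrite !inE => xz; rewrite bconnect_nu ?bconnect_sigma. Qed.

Lemma bconnectP F x y :
  reflect (forall S, bclosed F S -> x \in S -> y \in S) (bconnect F x y).
Proof.
apply: (iffP idP) => [xy S clS xS | inS]; last first.
  by move/(_ _ (@bcomp_closed F x)): inS; rewrite !inE connect0; apply.
apply: (connect_ind (fun z => z \in S) xy xS) => a b.
by rewrite bstepE => /orP[] /eqP-> /clS/andP[].
Qed.

Lemma bclosed_symdiff F F' S : bclosed F S ->
  {in S, forall z, ed z \in symdiff F F' -> tau z \in S} -> bclosed F' S.
Proof.
move=> clS tauS z zS; case/andP: (clS z zS) => -> sz /=.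
have [zFF' | zFF'] := boolP (ed z \in symdiff F F'); last by rewrite (sigma_out zFF').
by rewrite (sigma_in zFF') tauS ?ed_sigma.
Qed.

Definition same_comp x y := connect (vadj G) (vt x) (vt y).

Lemma vadj_sym : symmetric (vadj G).
Proof.
suff vadj_swap u w : vadj G u w -> vadj G w u.
  by move=> u w; apply/idP/idP; apply: vadj_swap.
by case/existsP=> z /andP[zu zw]; apply/existsP; exists (ep z); rewrite rg_epsK zu zw.
Qed.

Lemma same_comp_refl x : same_comp x x. Proof. exact: connect0. Qed.

Lemma same_comp_sym x y : same_comp x y = same_comp y x.
Proof. exact: (sym_connect_sym vadj_sym). Qed.

Lemma same_comp_trans x y z : same_comp x y -> same_comp y z -> same_comp x z.
Proof. exact: connect_trans. Qed.

Lemma same_comp_vt x y : vt x = vt y -> same_comp x y.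
Proof. by rewrite /same_comp => ->; apply: connect0. Qed.

Lemma same_comp_nu x : same_comp x (nu x).
Proof. by apply: same_comp_vt; rewrite rg_vt_nu. Qed.

Lemma same_comp_eps x : same_comp x (ep x).
Proof. by apply: connect1; apply/existsP; exists x; rewrite !eqxx. Qed.

Lemma same_comp_alpha x : same_comp x (al x).
Proof. by apply: same_comp_vt; rewrite rg_vt_alpha. Qed.

Lemma same_comp_tau x : same_comp x (tau x).
Proof. exact: same_comp_trans (same_comp_eps x) (same_comp_alpha _). Qed.

Lemma same_comp_sigma F x : same_comp x (sigma F x).
Proof.
by rewrite /sigma; case: ifP => _; [exact: same_comp_eps | exact: same_comp_alpha].
Qed.

Lemma same_comp_ed x y : ed y = ed x -> same_comp x y.
Proof.
case/edge_flags=> ->; [exact: same_comp_refl | exact: same_comp_alpha | |].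
- exact: same_comp_eps.
- exact: same_comp_tau.
Qed.

Lemma bconnect_same_comp F x y : bconnect F x y -> same_comp x y.
Proof.
move=> xy; apply: (connect_ind (same_comp x) xy (same_comp_refl x)) => a b.
rewrite bstepE => /orP[] /eqP-> xa.
  exact: same_comp_trans xa (same_comp_nu a).
exact: same_comp_trans xa (same_comp_sigma F a).
Qed.

Lemma same_comp_closed S x y :
  {in S, forall z, [&& nu z \in S, al z \in S & ep z \in S]} ->
  x \in S -> same_comp x y -> y \in S.
Proof.
move=> clS xS xy.
have vertexS z w : vt z = vt w -> z \in S -> w \in S.
  move=> /rg_vertex_circle zw zS; apply: (connect_ind (fun z => z \in S) zw zS).
  by move=> p q /orP[] /eqP-> /clS/and3P[].
suff : forall w, vt w = vt y -> w \in S by apply.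
apply: (connect_ind (fun v => forall w, vt w = v -> w \in S) xy).
  by move=> w /esym/vertexS; apply.
move=> v v' /existsP[f /andP[/eqP fv /eqP fv']] inS w wv'.
have /clS/and3P[_ _ efS] : f \in S by apply: inS.
by apply: vertexS efS; rewrite fv' wv'.
Qed.

Definition one_boundary F := forall x y, same_comp x y -> bconnect F x y.

Lemma isolated_comp_vt x :
  [set v | connect (vadj G) (vt x) v && [forall z, vt z != v]] = set0.
Proof.
apply/setP=> v; rewrite !inE; apply/negbTE/andP => -[xv /forallP noflag].
suff [vx | [z zv]] : v = vt x \/ exists z, vt z = v.
- by have := noflag x; rewrite vx eqxx.
- by have := noflag z; rewrite zv eqxx.
apply: (connect_ind (fun v => v = vt x \/ exists z, vt z = v) xv (or_introl erefl)).
by move=> _ _ /existsP[z /andP[_ /eqP <-]] _; right; exists (ep z).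
Qed.

Lemma n_boundary_in_vt F x :
  n_boundary_in G F (vt x) = #|[set bcomp F y | y in [set y | same_comp x y]]|.
Proof. by rewrite /n_boundary_in isolated_comp_vt cards0 addn0. Qed.

Lemma n_boundary_in_isolated F v : (forall x, vt x != v) -> n_boundary_in G F v = 1.
Proof.
move=> noflag; have comp_v w : connect (vadj G) v w -> w = v.
  move=> vw; apply: (connect_ind (eq^~ v) vw) => // p q /existsP[x /andP[/eqP xp _]] pv.
  by have := noflag x; rewrite xp pv eqxx.
rewrite /n_boundary_in.
have -> : [set x | connect (vadj G) v (vt x)] = set0.
  by apply/setP=> x; rewrite !inE; apply/negbTE/negP => /comp_v/eqP; apply/negP.
rewrite imset0 cards0 add0n; apply/eqP/cards1P; exists v; apply/setP=> w; rewrite !inE.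
apply/andP/eqP => [[/comp_v //] | ->]; split; [exact: connect0 | exact/forallP].
Qed.

Lemma quasi_treesE F : F \in quasi_trees G <-> one_boundary F.
Proof.
rewrite inE; split => [/forallP qt x y xy | qt].
  move: (qt (vt x)); rewrite n_boundary_in_vt => /cards1P[S eqS].
  have bcompS z : same_comp x z -> bcomp F z = S.
    by move=> xz; apply/set1P; rewrite -eqS; apply: imset_f; rewrite inE.
  have : y \in bcomp F y by rewrite inE connect0.
  by rewrite bcompS // -(bcompS x (same_comp_refl x)) inE.
apply/forallP=> v; have [x /eqP <- | noflag] := pickP (fun x => vt x == v); last first.
  by rewrite n_boundary_in_isolated // => x; rewrite noflag.
rewrite n_boundary_in_vt; apply/cards1P; exists (bcomp F x).
apply/setP=> S; rewrite inE; apply/imsetP/eqP => [[y xy ->] | ->].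
  by rewrite inE in xy; apply/esym/bcomp_eq/qt.
by exists x; rewrite ?inE ?same_comp_refl.
Qed.

Lemma one_boundary_local F F' a : one_boundary F ->
  (forall f, ed f \in symdiff F F' -> same_comp a f) ->
  (forall y, same_comp a y -> bconnect F' a y) -> one_boundary F'.
Proof.
move=> qt near_a conn_a x y xy.
have [ax | nax] := boolP (same_comp a x).
  apply: (@connect_trans _ _ a); last exact: conn_a (same_comp_trans ax xy).
  by rewrite bconnect_sym conn_a.
apply/bconnectP => S clS xS.
pose S' := [set z in S | ~~ same_comp a z].
have clS' : bclosed F S'.
  move=> z; rewrite !inE => /andP[zS naz]; case/andP: (clS z zS) => nuS sgS.
  have ez : ed z \notin symdiff F F' by apply: contra naz; apply: near_a.
  rewrite nuS -(sigma_out ez) sgS /=.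
  by apply/andP; split; apply: contra naz => /same_comp_trans; apply;
    rewrite same_comp_sym ?same_comp_nu ?same_comp_sigma.
have : y \in S' by move/bconnectP: (qt x y xy); apply => //; rewrite inE xS.
by rewrite inE => /andP[].
Qed.

Lemma edge_bconnect F c z : bconnect F c (tau c) -> ed z = ed c -> bconnect F c z.
Proof.
move=> ctc /(edge_flags_sigma F) [] ->; rewrite ?connect0 //.
- exact: bconnect_sigma (connect0 _ _).
- by rewrite -sigma_tau bconnect_sigma.
Qed.

Lemma bcomp_edge F g z : ~~ bconnect F g (tau g) -> bconnect F g z -> ed z = ed g ->
  z = g \/ z = sigma F g.
Proof.
move=> ngg gz /(edge_flags_sigma F) [] zE; [by left | by right | |]; case/negP: ngg.
- by rewrite -zE.
- by rewrite -[tau g](sigmaK F) sigma_tau -zE; apply: bconnect_sigma.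
Qed.

Lemma bcomp_off_edge F g w : ~~ bconnect F g (tau g) ->
  (w \in bcomp F g :\ g :\ sigma F g) = bconnect F g w && (ed w != ed g).
Proof.
move=> ngg; rewrite !inE; have [ew | ew] := eqVneq (ed w) (ed g); rewrite /= ?andbF ?andbT.
  apply/negbTE/and3P => -[w1 w2 gw].
  by case: (bcomp_edge ngg gw ew) => wE; [move: w2 | move: w1]; rewrite wE eqxx.
have -> : w != g by apply/eqP => wg; move: ew; rewrite wg eqxx.
by have -> // : w != sigma F g by apply/eqP => wg; move: ew; rewrite wg ed_sigma eqxx.
Qed.

Lemma bconnect_toggle F c x y :
  bconnect (toggle F (ed c)) c (tau c) -> bconnect F x y -> bconnect (toggle F (ed c)) x y.
Proof.
set F' := toggle F (ed c) => ctc xy.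
have clx : bclosed F (bcomp F' x).
  apply: (bclosed_symdiff (@bcomp_closed F' x)) => z.
  rewrite symdiffC symdiff_toggle !inE => xz /eqP ez.
  apply: connect_trans xz _; apply: (@connect_trans _ _ c).
    by rewrite bconnect_sym; apply: edge_bconnect.
  by apply: edge_bconnect; rewrite ?ed_tau.
by move/bconnectP: xy => /(_ _ clx); rewrite !inE connect0; apply.
Qed.

Lemma even_bcompI F F' x y : ~~ odd #|bcomp F x :&: bcomp F' y|.
Proof.
apply: (@even_card_involution _ _ nu) => z; rewrite !inE => /andP[xz yz].
by rewrite rg_nuK rg_nu_nfix !bconnect_nu.
Qed.

Lemma bcompI_no_involution F F' c (f : X -> X) :
  ~ {in bcomp F c :&: bcomp F' c :\ c,
      forall z, [/\ f z \in bcomp F c :&: bcomp F' c :\ c, f z != z & f (f z) = z]}.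
Proof.
move=> fS; have := even_bcompI F F' c c.
rewrite (cardsD1 c) !inE !connect0 add1n /= negbK.
by apply/negP; apply: even_card_involution fS.
Qed.

Lemma toggle_merge F c :
  ~~ bconnect F c (tau c) -> bconnect (toggle F (ed c)) c (tau c).
Proof.
set F' := toggle F (ed c) => nc; apply/negPn/negP => nc'.
apply: (@bcompI_no_involution F F' c (sigma F)) => z.
rewrite !inE => /and3P[zc cz cz'].
have ez : ed z != ed c.
  apply: contra zc => /eqP ez; case: (bcomp_edge nc cz ez) => [-> // | zE].
  case/negP: nc'; have := bconnect_sigma cz'.
  by rewrite zE sigma_toggle ?ed_sigma // sigmaK.
have zF : bconnect F c (sigma F z) := bconnect_sigma cz.
have zF' : bconnect F' c (sigma F z) by rewrite -(sigma_toggle_out F ez) bconnect_sigma.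
rewrite zF zF' !andbT; split; [|exact: sigma_neq|exact: sigmaK].
by apply: contra ez => /eqP <-; rewrite ed_sigma.
Qed.

Lemma toggle_one_boundary F c : one_boundary F ->
  bconnect (toggle F (ed c)) c (tau c) -> one_boundary (toggle F (ed c)).
Proof. by move=> qt ctc x y /qt; apply: bconnect_toggle. Qed.

Lemma toggle_split F a g : one_boundary F -> same_comp a g ->
  bconnect (toggle F (ed a)) a g \/ bconnect (toggle F (ed a)) (tau a) g.
Proof.
set F' := toggle F (ed a) => qt ag.
pose S := bcomp F' a :|: bcomp F' (tau a).
have edgeS w : ed w = ed a -> w \in S.
  have a_sa := bconnect_sigma (connect0 (bstep G F') a).
  have ta_sta := bconnect_sigma (connect0 (bstep G F') (tau a)).
  case/(edge_flags_sigma F') => ->; rewrite !inE ?connect0 ?a_sa ?orbT //.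
  by rewrite -sigma_tau ta_sta orbT.
have clS' : bclosed F' S.
  move=> z; rewrite !inE => /orP[] az;
    by rewrite (bconnect_nu az) (bconnect_sigma az) ?orbT.
have clS : bclosed F S.
  apply: (bclosed_symdiff clS') => z _.
  by rewrite symdiffC symdiff_toggle inE => /eqP ez; apply: edgeS; rewrite ed_tau.
have : g \in S by move/bconnectP: (qt a g ag); apply => //; apply: edgeS.
by rewrite !inE; case/orP; [left | right].
Qed.

Lemma toggle2_one_boundary F a g : one_boundary F ->
  bconnect (toggle F (ed a)) a g -> ~~ bconnect (toggle F (ed a)) g (tau g) ->
  one_boundary (toggle (toggle F (ed a)) (ed g)).
Proof.
set u := toggle F (ed a) => qt ag ngg.
have mono x y : bconnect u x y -> bconnect (toggle u (ed g)) x y.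
  exact: bconnect_toggle (toggle_merge ngg).
have ag' := bconnect_same_comp ag.
apply: (one_boundary_local qt) => [f /in_symdiff_toggle2 /orP[] /eqP ef | h ah].
- exact: same_comp_ed ef.
- exact: same_comp_trans ag' (same_comp_ed ef).
have [/mono // | tah] := toggle_split qt ah.
have tatg : bconnect u (tau a) (tau g).
  have [atg |//] := toggle_split qt (same_comp_trans ag' (same_comp_tau g)).
  by case/negP: ngg; apply: connect_trans atg; rewrite bconnect_sym.
apply: connect_trans (mono _ _ ag) _; apply: connect_trans (toggle_merge ngg) _.
by apply: (@connect_trans _ _ (tau a)); [rewrite bconnect_sym |]; apply: mono.
Qed.

Lemma rotation_inj F : injective (fun x => nu (sigma F x)).
Proof.
by apply: (@can_inj _ _ _ (fun x => sigma F (nu x))) => x; rewrite rg_nuK sigmaK.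
Qed.

Definition rotation F : {perm X} := perm (@rotation_inj F).

Lemma rotationE F x : rotation F x = nu (sigma F x).
Proof. by rewrite permE. Qed.

Definition colour F a : {set X} := porbit (rotation F) a.

Lemma nu_notin_colour F x : nu x \notin colour F x.
Proof.
apply: involution_notin_porbit (rg_nuK G) (sigmaK F) (rg_nu_nfix G) (sigma_neq F) _.
exact: rotationE.
Qed.

Lemma colour_nu_out F a h : h \in colour F a -> nu h \notin colour F a.
Proof.
move=> ha; have /eqP <- : colour F h == colour F a by rewrite eq_porbit_mem.
exact: nu_notin_colour.
Qed.

Lemma mem_colour_rotation F a g : (rotation F g \in colour F a) = (g \in colour F a).
Proof.
have := porbit_perm (rotation F) 1 g; rewrite expg1 => rot_g.
by rewrite /colour porbit_sym rot_g porbit_sym.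
Qed.

Lemma bclosed_porbit F (s : {perm X}) a :
  {in porbit s a, forall h, sigma F h = nu (s h)} ->
  bclosed F [set g | (g \in porbit s a) || (nu g \in porbit s a)].
Proof.
move=> sE z; rewrite !inE rg_nuK => /orP[] za.
  by rewrite za sE // rg_nuK porbit_step ?orbT.
have wa : (s^-1)%g (nu z) \in porbit s a by apply: porbit_stepV.
rewrite za /=; have <- : sigma F ((s^-1)%g (nu z)) = z by rewrite sE // permKV rg_nuK.
by rewrite sigmaK wa.
Qed.

Lemma colour_nu F a g : one_boundary F -> same_comp a g ->
  (nu g \in colour F a) = (g \notin colour F a).
Proof.
move=> qt ag; have [gC | gC] := boolP (g \in colour F a); first exact/negbTE/colour_nu_out.
have : g \in [set g | (g \in colour F a) || (nu g \in colour F a)].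
  move/bconnectP: (qt a g ag); apply; last by rewrite inE porbit_id.
  by apply: bclosed_porbit => h _; rewrite rotationE rg_nuK.
by rewrite inE (negbTE gC).
Qed.

Lemma colour_sigma F a g : one_boundary F -> same_comp a g ->
  (sigma F g \in colour F a) = (g \notin colour F a).
Proof.
move=> qt ag; rewrite -[sigma F g](rg_nuK G) -rotationE colour_nu ?mem_colour_rotation //.
rewrite rotationE; apply: same_comp_trans (same_comp_trans ag (same_comp_sigma F g)) _.
exact: same_comp_nu.
Qed.

Lemma colour_parity Z a F b p q (f : X -> X) :
  one_boundary Z -> same_comp a b ->
  p \in bcomp F b -> q \in bcomp F b -> p != q ->
  (p \in colour Z a) = (q \in colour Z a) ->
  ~ {in bcomp F b :\ p :\ q, forall z, [/\ f z \in bcomp F b :\ p :\ q,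
      (f z \in colour Z a) != (z \in colour Z a) & f (f z) = z]}.
Proof.
set R := bcomp F b; set C := colour Z a => qt ab pR qR pq pq_colour fS.
have nu_swap : #|R :&: C| = #|R :\: C|.
  apply: (@card_involution_swap _ _ _ nu) => z; rewrite inE => bz.
  rewrite inE (bconnect_nu bz) rg_nuK (colour_nu qt); last first.
    exact: same_comp_trans ab (bconnect_same_comp bz).
  by case: (z \in C).
move: nu_swap; rewrite setDE (cardsI_D2 C pR qR pq) (cardsI_D2 (~: C) pR qR pq).
rewrite -setDE (card_involution_swap fS) !inE pq_colour.
by case: (q \in C) => /=; lia.
Qed.

Lemma toggle_one_boundary_colour Z a g : one_boundary Z -> same_comp a g ->
  (sigma (toggle Z (ed g)) g \in colour Z a) = (g \in colour Z a) ->
  one_boundary (toggle Z (ed g)).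
Proof.
set w := toggle Z (ed g) => qt ag same; apply: toggle_one_boundary => //.
apply/negPn/negP => ngg.
have gw : g \in bcomp w g by rewrite inE connect0.
have sgw : sigma w g \in bcomp w g by rewrite inE bconnect_sigma ?connect0.
apply: (colour_parity qt ag gw sgw _ (esym same) (f := sigma Z)).
  by rewrite eq_sym sigma_neq.
move=> z; rewrite !(bcomp_off_edge _ ngg) => /andP[gz ez].
rewrite sigmaK (colour_sigma qt) ?(same_comp_trans ag (bconnect_same_comp gz)) //.
rewrite -[sigma Z z](sigma_toggle_out Z ez) bconnect_sigma // ed_sigma ez.
by split=> //; case: (z \in colour Z a).
Qed.

Lemma sigma_toggle_colour Z a : one_boundary Z -> one_boundary (toggle Z (ed a)) ->
  sigma (toggle Z (ed a)) a \in colour Z a.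
Proof.
set F := toggle Z (ed a); set C := colour Z a => qt qtF; apply/negPn/negP => saC.
have aC : a \in C by apply: porbit_id.
have sZaC : sigma Z a \notin C by rewrite (colour_sigma qt) ?same_comp_refl ?aC.
have sFa : sigma F a = tau (sigma Z a) by apply: sigma_toggle.
have sZta : sigma Z (tau a) = sigma F a by rewrite sigma_tau sFa.
have sFta : sigma F (tau a) = sigma Z a by rewrite sigma_toggle ?ed_tau // sZta sFa tauK.
have taC : tau a \in C.
  by move: (colour_sigma qt (same_comp_tau a)); rewrite sZta (negbTE saC) => /esym/negbFE.
pose psi := (tperm a (tau a) * rotation Z)%g.
have psiC : {subset porbit psi a <= C}.
  move=> h /porbitP[i ->]; elim: i => [|i IH]; first by rewrite expg0 perm1.
  by rewrite expgSr permM permM; apply: porbit_step; case: tpermP.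
have sF_psi : {in porbit psi a, forall h, sigma F h = nu (psi h)}.
  move=> h /psiC hC; rewrite permM rotationE rg_nuK.
  case: tpermP => [-> | -> | ha hta]; rewrite ?sZta ?sFta //.
  apply: sigma_toggle_out; apply/eqP => /(edge_flags_sigma Z) [] hE.
  - exact: ha hE.
  - by move: hC; rewrite hE (negbTE sZaC).
  - exact: hta hE.
  - by move: hC; rewrite hE -sFa (negbTE saC).
have : tau a \in [set g | (g \in porbit psi a) || (nu g \in porbit psi a)].
  move/bconnectP: (qtF a (tau a) (same_comp_tau a)); apply.
    exact: bclosed_porbit.
  by rewrite inE porbit_id.
rewrite inE => /orP[ta_psi | nta_psi]; last by move: (colour_nu_out taC); rewrite psiC.
have := @porbit_tperm_mul _ (rotation Z) a (tau a).
by rewrite eq_sym tau_neq porbit_sym taC porbit_sym ta_psi => /(_ isT isT).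
Qed.

Lemma toggle2_one_boundary_sigma F F' a g : one_boundary F ->
  bconnect (toggle F (ed a)) a g -> sigma F' g \notin bcomp (toggle F (ed a)) a ->
  ed g \in symdiff (toggle F (ed a)) F' /\ one_boundary (toggle (toggle F (ed a)) (ed g)).
Proof.
set u := toggle F (ed a) => qt ag nP.
have gD : ed g \in symdiff u F'.
  by apply: contraR nP => /sigma_out ->; rewrite inE bconnect_sigma.
split=> //; apply: toggle2_one_boundary => //; apply: contra nP => ggt.
by rewrite inE (sigma_in gD) -sigma_tau; apply: bconnect_sigma (connect_trans ag ggt).
Qed.

Lemma one_boundary_dec F : decidable (one_boundary F).
Proof.
have [/quasi_treesE | nq] := boolP (F \in quasi_trees G); first by left.
by right => /quasi_treesE; apply/negP.
Qed.

Section Exchange.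
Variables (F1 F2 : {set E}) (a : X).
Hypotheses (qt1 : one_boundary F1) (qt2 : one_boundary F2).
Hypothesis aD : ed a \in symdiff F1 F2.
Local Notation u := (toggle F1 (ed a)).
Local Notation Z := (toggle F2 (ed a)).
Local Notation C := (colour Z a).

Lemma exchange_at g : ed g != ed a -> ed g \in symdiff F1 F2 ->
  one_boundary (toggle u (ed g)) -> one_boundary (toggle Z (ed g)) ->
  exists2 y, y \in symdiff F1 F2 &
    one_boundary (symdiff F1 [set ed a; y]) /\ one_boundary (symdiff F2 [set ed a; y]).
Proof. by move=> ga gD q1 q2; exists (ed g); rewrite // -!toggle2 // eq_sym. Qed.

Lemma sigma_u_a : sigma u a = sigma F2 a.
Proof.
apply: sigma_out; move: aD; rewrite /toggle !in_symdiff !inE eqxx.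
by case: (ed a \in F1); case: (ed a \in F2).
Qed.

Lemma not_one_boundary_u : ~ one_boundary u -> ~~ bconnect u a (tau a).
Proof. by move=> nqt; apply/negP => /(toggle_one_boundary qt1). Qed.

Lemma not_one_boundary_Z : ~ one_boundary Z -> ~~ bconnect Z a (tau a).
Proof. by move=> nqt; apply/negP => /(toggle_one_boundary qt2). Qed.

Section OneSide.
Hypotheses (nqt_u : ~ one_boundary u) (qt_Z : one_boundary Z).

Let pairing z := if (sigma u z \in C) != (z \in C) then sigma u z else sigma Z z.

Lemma one_side_pairing :
  (forall g, bconnect u a g -> ed g != ed a -> (sigma u g \in C) == (g \in C) ->
     bconnect u a (sigma Z g)) ->
  {in bcomp u a :\ a :\ sigma u a, forall z,
    [/\ pairing z \in bcomp u a :\ a :\ sigma u a,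
        (pairing z \in C) != (z \in C) & pairing (pairing z) = z]}.
Proof.
have nat := not_one_boundary_u nqt_u.
move=> sigmaZ_in z; rewrite !(bcomp_off_edge _ nat) => /andP[az ez].
have az' := bconnect_same_comp az.
rewrite /pairing; have [swap | same] := boolP ((sigma u z \in C) != (z \in C)).
  have swap' : (z \in C) != (sigma u z \in C) by rewrite eq_sym.
  by rewrite sigmaK swap' bconnect_sigma // ed_sigma ez.
have zD : ed z \in symdiff Z u.
  apply: contraR same => /sigma_out ->.
  by rewrite (colour_sigma qt_Z az'); case: (z \in C).
have suz : sigma u z = tau (sigma Z z) := sigma_in zD.
have usz : sigma u (sigma Z z) = tau z by rewrite (sigma_in (F:=Z)) ?ed_sigma // sigmaK.
have tzC : (tau z \in C) = ~~ (z \in C).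
  have := colour_sigma qt_Z (same_comp_trans az' (same_comp_tau z)).
  rewrite sigma_tau -suz; move: same.
  by case: (z \in C); case: (sigma u z \in C); case: (tau z \in C).
rewrite usz tzC (colour_sigma qt_Z az') eqxx /= sigmaK ed_sigma ez andbT.
rewrite sigmaZ_in //; last by move: same; rewrite negbK.
by case: (z \in C).
Qed.

Lemma one_side_witness : exists g, [&& bconnect u a g, ed g != ed a,
  (sigma u g \in C) == (g \in C) & sigma Z g \notin bcomp u a].
Proof.
case: (pickP (fun g => [&& bconnect u a g, ed g != ed a,
  (sigma u g \in C) == (g \in C) & sigma Z g \notin bcomp u a])) => [g wit | none].
  by exists g.
exfalso; have saC : sigma u a \in C.
  by rewrite sigma_u_a; have := @sigma_toggle_colour Z a qt_Z; rewrite toggleK; apply.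
apply: (colour_parity qt_Z (same_comp_refl a) _ _ _ _ (one_side_pairing _)).
- by rewrite inE connect0.
- by rewrite inE bconnect_sigma.
- by rewrite eq_sym sigma_neq.
- by rewrite saC porbit_id.
- move=> g ag ga same; apply/negPn/negP => nP.
  by have := none g; rewrite /= ag ga same inE nP.
Qed.

Lemma exchange_one_side :
  exists2 y, y \in symdiff F1 F2 &
    one_boundary (symdiff F1 [set ed a; y]) /\ one_boundary (symdiff F2 [set ed a; y]).
Proof.
have [g /and4P[ag ga same nP]] := one_side_witness.
have [gD qt_ug] := toggle2_one_boundary_sigma qt1 ag nP.
apply: (exchange_at ga) => //; first by rewrite -(symdiff_toggle2 F1 F2 (ed a)).
apply: (toggle_one_boundary_colour qt_Z (bconnect_same_comp ag)).
rewrite sigma_toggle // (sigma_in gD) tauK.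
exact/eqP.
Qed.

End OneSide.

Section NoSide.
Hypotheses (nqt_u : ~ one_boundary u) (nqt_Z : ~ one_boundary Z).

Let pairing z := if sigma u z \in bcomp Z a then sigma u z else sigma Z z.

Lemma no_side_pairing :
  (forall g, bconnect u a g -> bconnect Z a g -> ed g != ed a ->
     sigma u g \notin bcomp Z a -> bconnect u a (sigma Z g)) ->
  {in bcomp u a :&: bcomp Z a :\ a, forall z,
    [/\ pairing z \in bcomp u a :&: bcomp Z a :\ a, pairing z != z
      & pairing (pairing z) = z]}.
Proof.
have nat := not_one_boundary_u nqt_u; have nZt := not_one_boundary_Z nqt_Z.
move=> sigmaZ_in z; rewrite !inE => /and3P[za az Zz].
have ez : ed z != ed a.
  apply/eqP => /(bcomp_edge nat az) [zE | zE]; first by rewrite zE eqxx in za.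
  case/negP: nZt; have := bconnect_sigma Zz.
  by rewrite zE sigma_u_a sigma_toggle ?ed_sigma // sigmaK.
have off_a w : ed w = ed z -> w != a by move=> wz; apply: contra ez => /eqP <-; rewrite wz.
rewrite /pairing; have [uZ | nuZ] := boolP (sigma u z \in bcomp Z a).
  rewrite sigmaK inE Zz off_a ?ed_sigma // bconnect_sigma //.
  by move: uZ; rewrite inE => ->; rewrite sigma_neq.
have zD : ed z \in symdiff Z u.
  by apply: contraR nuZ => /sigma_out ->; rewrite inE bconnect_sigma.
have usz : sigma u (sigma Z z) = tau z by rewrite (sigma_in (F:=Z)) ?ed_sigma // sigmaK.
have ntz : tau z \notin bcomp Z a.
  apply: contra nuZ; rewrite !inE (sigma_in zD) -sigma_tau; exact: bconnect_sigma.
rewrite usz (negbTE ntz) sigmaK off_a ?ed_sigma // sigma_neq sigmaZ_in //.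
by rewrite bconnect_sigma.
Qed.

Lemma no_side_witness : exists g, [&& bconnect u a g, bconnect Z a g, ed g != ed a,
  sigma u g \notin bcomp Z a & sigma Z g \notin bcomp u a].
Proof.
case: (pickP (fun g => [&& bconnect u a g, bconnect Z a g, ed g != ed a,
  sigma u g \notin bcomp Z a & sigma Z g \notin bcomp u a])) => [g wit | none].
  by exists g.
exfalso; apply: (bcompI_no_involution (no_side_pairing _)).
move=> g ug Zg ga nZ; apply/negPn/negP => nP.
by have := none g; rewrite /= ug Zg ga nZ inE nP.
Qed.

Lemma exchange_no_side :
  exists2 y, y \in symdiff F1 F2 &
    one_boundary (symdiff F1 [set ed a; y]) /\ one_boundary (symdiff F2 [set ed a; y]).
Proof.
have [g /and5P[ug Zg ga nZ nP]] := no_side_witness.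
have [gD qt_ug] := toggle2_one_boundary_sigma qt1 ug nP.
have [_ qt_Zg] := toggle2_one_boundary_sigma qt2 Zg nZ.
by apply: (exchange_at ga) => //; rewrite -(symdiff_toggle2 F1 F2 (ed a)).
Qed.

End NoSide.
End Exchange.

Lemma one_boundary_exchange F1 F2 e :
  one_boundary F1 -> one_boundary F2 -> e \in symdiff F1 F2 ->
  exists2 y, y \in symdiff F1 F2 &
    one_boundary (symdiff F1 [set e; y]) /\ one_boundary (symdiff F2 [set e; y]).
Proof.
move=> qt1 qt2; have [a <-] : exists a, ed a = e.
  have : 0 < #|[set z | ed z == e]| by rewrite rg_edge4.
  by rewrite card_gt0 => /set0Pn[a]; rewrite inE => /eqP ae; exists a.
move=> eD; have eD' : ed a \in symdiff F2 F1 by rewrite symdiffC.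
have [q1 | nq1] := one_boundary_dec (toggle F1 (ed a));
  have [q2 | nq2] := one_boundary_dec (toggle F2 (ed a)).
- by exists (ed a) => //; rewrite setUid; split.
- have [y yD [q2' q1']] := exchange_one_side qt2 qt1 eD' nq2 q1.
  by exists y; [rewrite symdiffC | split].
- exact: exchange_one_side.
- exact: exchange_no_side.
Qed.

Lemma one_boundary_of_tau F : (forall c, bconnect F c (tau c)) -> one_boundary F.
Proof.
move=> ctc x y xy; have : y \in bcomp F x; last by rewrite inE.
apply: (same_comp_closed _ _ xy); last by rewrite inE connect0.
move=> z; rewrite !inE => xz; rewrite bconnect_nu //=.
have xs := bconnect_sigma xz; have := connect_trans xs (ctc _).
by move: xs; rewrite /sigma; case: ifP => _; rewrite ?tau_alpha ?tau_eps => -> ->.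
Qed.

Lemma exists_one_boundary : exists F, one_boundary F.
Proof.
pose npairs F := #|[set p : X * X | bconnect F p.1 p.2]|.
have [F _ F_max] := @arg_maxnP _ set0 xpredT npairs isT.
exists F; apply: one_boundary_of_tau => c; apply/negPn/negP => nc.
have : npairs F < npairs (toggle F (ed c)).
  apply: proper_card; apply/properP; split.
    by apply/subsetP=> p; rewrite !inE; apply: bconnect_toggle (toggle_merge nc).
  by exists (c, tau c); rewrite !inE /= ?toggle_merge // (negbTE nc).
by move/leq_trans/(_ (F_max _ isT)); rewrite ltnn.
Qed.

Lemma quasi_trees_neq0 : quasi_trees G != set0.
Proof. by have [F /quasi_treesE qF] := exists_one_boundary; apply/set0Pn; exists F. Qed.

Lemma quasi_trees_exchange B1 B2 : B1 \in quasi_trees G -> B2 \in quasi_trees G ->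
  forall e, e \in symdiff B1 B2 ->
  exists2 y, y \in symdiff B1 B2 &
    (symdiff B1 [set e; y] \in quasi_trees G) /\ (symdiff B2 [set e; y] \in quasi_trees G).
Proof.
move=> /quasi_treesE qt1 /quasi_treesE qt2 e /(one_boundary_exchange qt1 qt2)[y yD [q1 q2]].
by exists y => //; split; apply/quasi_treesE.
Qed.

End RibbonFlags.

Theorem corollary2p33 (V E X : finType) (G : ribbon_graph V E X) :
  is_strong_delta_matroid (quasi_trees G).
Proof.
split; last exact: quasi_trees_exchange.
split=> [|B1 B2 q1 q2 e eD]; first exact: quasi_trees_neq0.
by have [y yD [q1' _]] := quasi_trees_exchange q1 q2 eD; exists y.
Qed.
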